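(* Let $T$ be a Steiner-closed search tree of a tree $G$, and let $\Pi=p_0,p_1,\dots,p_j$ be the path in $T$ from the root $p_0$ to a node $p_j$. For any $i\in\{1,\dots,j\}$, let $\Pi'=\{p_i,\dots,p_j\}$. Then removing the vertices of $\mathrm{CH}(\Pi')$ from $\mathrm{CH}(\Pi)$ leaves a graph with at most $2$ connected components.
   Context: Search tree on a tree: a rooted tree $T$ is a valid search tree on an unrooted tree $G$ if the root $r$ of $T$ is a vertex of $G$ and the subtrees of $T\setminus r$ are valid search trees on the connected components of $G\setminus r$. For vertices $a,b$ of $G$, $P(a,b)$ is the vertex set of the path from $a$ to $b$ in $G$. Convex hull: for $S\subseteq V(G)$, $\mathrm{CH}(S)$ is the subgraph of $G$ induced by $\bigcup_{a,b\in S}P(a,b)$. A set $S$ is Steiner-closed (with respect to $G$) if every vertex of $\mathrm{CH}(S)\setminus S$ has degree exactly $2$ in $\mathrm{CH}(S)$. A search tree $T$ of $G$ is Steiner-closed if for every node $v$ of $T$, the set of nodes on the path in $T$ from the root to $v$ is a Steiner-closed set with respect to $G$. *)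

From HB Require Import structures.
From Stdlib Require Import List.
From mathcomp Require Import all_boot.
Set Implicit Arguments. Unset Strict Implicit. Unset Printing Implicit Defensive.

Section Defs.
Variables (V : finType) (e : rel V).

Definition gpath (a : V) (p : seq V) (b : V) : bool :=
  [&& path e a p, last a p == b & uniq (a :: p)].

Definition is_tree : Prop :=
  [/\ symmetric e, irreflexive e, (forall a b, connect e a b) &
      (forall a b p q, gpath a p b -> gpath a q b -> p = q)].

(* x lies on P(a,b), the vertex set of the path from a to b.
   (Simple paths have at most #|V| vertices, so the tuple bound is harmless.) *)
Definition onpath (a b x : V) : bool :=
  [exists n : 'I_#|V|.+1, exists p : n.-tuple V, gpath a p b && (x \in a :: p)].

Definition hull (S : {set V}) : {set V} :=
  [set x | [exists a in S, exists b in S, onpath a b x]].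

Definition restr (A : {set V}) : rel V :=
  [rel x y | [&& e x y, x \in A & y \in A]].

Definition components (A : {set V}) : {set {set V}} :=
  [set [set y in A | connect (restr A) x y] | x in A].

Definition steiner_closed (S : {set V}) : Prop :=
  forall v, v \in hull S :\: S -> #|[set u in hull S | e v u]| = 2.

End Defs.

Inductive rtree (V : Type) := Node : V -> seq (rtree V) -> rtree V.
Arguments Node {V}.

Fixpoint tset (V : finType) (t : rtree V) : {set V} :=
  match t with
  | Node r ts => r |: (fix go (l : seq (rtree V)) : {set V} :=
                         match l with [::] => set0 | t' :: l' => tset t' :|: go l' end) ts
  end.

(* valid_st e S t : t is a valid search tree on the subgraph of G induced on S
   (S assumed connected): the root r is in S and the subtrees are valid search
   trees on the connected components of G[S] \ r, one per component. *)
Inductive valid_st (V : finType) (e : rel V) : {set V} -> rtree V -> Prop :=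
| VST (S : {set V}) (r : V) (ts : seq (rtree V)) :
    r \in S ->
    perm_eq [seq tset t | t <- ts] (enum (components e (S :\ r))) ->
    (forall t, List.In t ts -> valid_st e (tset t) t) ->
    valid_st e S (Node r ts).

Definition search_tree (V : finType) (e : rel V) (T : rtree V) : Prop :=
  valid_st e [set: V] T.

Inductive tpath (V : Type) : rtree V -> seq V -> Prop :=
| TP0 r ts : tpath (Node r ts) [:: r]
| TPS r ts t p : List.In t ts -> tpath t p -> tpath (Node r ts) (r :: p).

Definition steiner_closed_tree (V : finType) (e : rel V) (T : rtree V) : Prop :=
  forall p, tpath T p -> steiner_closed e [set x in p].

(* Write P = {p_0, ..., p_(i-1)} and Q = {p_i, ..., p_j}.  Because the search
   tree is valid, Q lies in the vertex set C of the subtree rooted at p_i,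
   which is a connected component of G - P; and P is Steiner-closed, being the
   node set of a root path.  The proof then has three ingredients:
   - tree geometry: P(a,b) is the unique simple path, its inner vertices are
     exactly the separators of a and b, and hulls and connected sets are
     convex;
   - attachments_le2: a connected set outside a Steiner-closed P is adjacent
     to at most two vertices of P, as a third one would create a vertex of
     CH(P) \ P of degree at least 3 in CH(P);
   - reach_attachment: every vertex of CH(P u Q) \ CH(Q) is joined inside
     this set to one of these (at most two) attachments of C. *)

From HB Require Import structures.
From mathcomp Require Import all_boot.
Set Implicit Arguments. Unset Strict Implicit. Unset Printing Implicit Defensive.

Section Tree.
Variables (V : finType) (e : rel V).
Hypothesis Htree : is_tree e.

Lemma e_sym : symmetric e. Proof. by case: Htree. Qed.

Definition connected_set (A : {set V}) : Prop :=
  {in A &, forall x y, connect (restr e A) x y}.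

Lemma restr_sym (A : {set V}) : symmetric (restr e A).
Proof. by move=> x y; rewrite /restr /= e_sym (andbC (x \in A)). Qed.

Lemma connect_restr_sym (A : {set V}) x y :
  connect (restr e A) x y = connect (restr e A) y x.
Proof. exact: (sym_connect_sym (restr_sym A)). Qed.

Lemma restr_path (A : {set V}) a p :
  path e a p -> all [in A] (a :: p) -> path (restr e A) a p.
Proof.
elim: p a => //= b p IH a /andP[eab Hp] /andP[aA /andP[bA Hall]].
by rewrite /restr /= eab aA bA /= IH //= bA.
Qed.

Lemma restr_path_base (A : {set V}) a p : path (restr e A) a p -> path e a p.
Proof. by apply: sub_path => x y /andP[]. Qed.

Lemma restr_path_mem (A : {set V}) a p : path (restr e A) a p -> {subset p <= A}.
Proof.
elim: p a => //= b p IH a /andP[/and3P[_ _ bA] Hp] z.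
by rewrite inE => /orP[/eqP -> //|]; exact: IH Hp z.
Qed.

Lemma connect_restr_mem (A : {set V}) a y :
  connect (restr e A) a y -> a != y -> y \in A.
Proof.
move/connectP => [p Hp ->] Hne.
have : last a p \in a :: p by apply: mem_last.
by rewrite inE eq_sym (negbTE Hne) => /(restr_path_mem Hp).
Qed.

Lemma connect_restr_sub (A B : {set V}) x y :
  A \subset B -> connect (restr e A) x y -> connect (restr e B) x y.
Proof.
move=> AB; apply: connect_sub => {}x {}y /and3P[exy xA yA].
by apply: connect1; rewrite /restr /= exy (subsetP AB _ xA) (subsetP AB _ yA).
Qed.

Lemma connect_restr_uniq_path (A : {set V}) x z :
  connect (restr e A) x z -> x \in A ->
  exists q, [/\ path e x q, uniq (x :: q), last x q = z & all [in A] (x :: q)].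
Proof.
move/connectP => [p Hp ->] xA.
case: (shortenP Hp) => p' Hp' Hu _.
exists p'; split => //; first exact: restr_path_base Hp'.
by apply/allP => y; rewrite inE => /orP[/eqP -> //|/(restr_path_mem Hp')].
Qed.

Lemma path_exit (X C : {set V}) a p :
  path e a p -> all [in X] (a :: p) -> a \notin C -> last a p \in C ->
  exists u v, [/\ e u v, u \in X :\: C, v \in X :&: C
                & connect (restr e (X :\: C)) a u].
Proof.
elim: p a => [|b p IH] a /=; first by move=> _ _ /negbTE ->.
move=> /andP[eab Hp] /andP[aX Hall] aC Hl.
case bC: (b \in C).
  case/andP: Hall => bX _.
  by exists a, b; split; rewrite ?inE ?aX ?aC ?bX ?bC //; exact: connect0.
have [u [v [Huv uXC vXC Hbu]]] := IH b Hp Hall (negbT bC) Hl.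
exists u, v; split => //; apply: connect_trans Hbu; apply: connect1.
by case/andP: Hall => bX _; rewrite /restr /= eab !inE aX bX aC bC.
Qed.

Lemma gpath_exists a b : exists q, gpath e a q b.
Proof.
case: Htree => _ _ Hconn _.
move/connectP: (Hconn a b) => [p Hp ->].
case: (shortenP Hp) => p' Hp' Hu _.
by exists p'; rewrite /gpath Hp' eqxx Hu.
Qed.

Lemma gpath_unique a p q b : gpath e a p b -> gpath e a q b -> p = q.
Proof. by case: Htree => _ _ _; apply. Qed.

Lemma onpathP a b x :
  reflect (exists2 q, gpath e a q b & x \in a :: q) (onpath e a b x).
Proof.
apply: (iffP existsP); first by case=> n /existsP [p /andP [Hp Hx]]; exists p.
case=> q Hq Hx.
have Hsize : size q < #|V|.+1.
  case/and3P: Hq => _ _ /card_uniqP Hu.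
  by have := max_card (mem (a :: q)); rewrite Hu /=; apply: leqW.
exists (Ordinal Hsize); apply/existsP; exists (in_tuple q).
by rewrite /= Hq Hx.
Qed.

Lemma onpath_gpath a q b x : gpath e a q b -> onpath e a b x = (x \in a :: q).
Proof.
move=> Hq; apply/onpathP/idP; last by exists q.
by case=> q' Hq' Hx; rewrite (gpath_unique Hq Hq').
Qed.

Lemma onpath_left a b : onpath e a b a.
Proof. by case: (gpath_exists a b) => q Hq; rewrite (onpath_gpath _ Hq) mem_head. Qed.

Lemma onpath_right a b : onpath e a b b.
Proof.
case: (gpath_exists a b) => q Hq; rewrite (onpath_gpath _ Hq).
by case/and3P: Hq => _ /eqP <- _; apply: mem_last.
Qed.

Lemma onpath_same x y : onpath e x x y -> y = x.
Proof.
case/onpathP => q /and3P[_ /eqP Hl Hu].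
case: q Hl Hu => [_ _|b q Hl /andP[Hx _]]; first by rewrite inE => /eqP.
by move: Hx; rewrite -{1}Hl /=; have := mem_last b q; rewrite inE => ->.
Qed.

Lemma connect_onpath a b : connect (restr e [set y | onpath e a b y]) a b.
Proof.
case: (gpath_exists a b) => q Hq; have [Hp /eqP Hl _] := and3P Hq.
have Hp' : path (restr e [set y | onpath e a b y]) a q.
  by apply: restr_path Hp _; apply/allP => z Hz; rewrite inE (onpath_gpath _ Hq).
by apply: (path_connect Hp'); rewrite -Hl mem_last.
Qed.

Lemma connect_restr_onpath (A : {set V}) a b y :
  onpath e a b y -> connect (restr e A) a b -> connect (restr e A) a y.
Proof.
case/onpathP => q Hq Hy /connectP [p Hp Hb].
move: Hb; case: (shortenP Hp) => p' Hp' Hu _ Hb.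
have Hg : gpath e a p' b by rewrite /gpath (restr_path_base Hp') Hb eqxx Hu.
by rewrite (gpath_unique Hq Hg) in Hy; apply: (path_connect Hp').
Qed.

Lemma onpath_separates a b x :
  onpath e a b x = (x == a) || ~~ connect (restr e [set~ x]) a b.
Proof.
apply/idP/idP.
  move=> Hx; case: eqVneq => //= Hxa; apply/negP => Hab.
  have := connect_restr_mem (connect_restr_onpath Hx Hab); rewrite !inE eqxx.
  by rewrite eq_sym Hxa => /(_ isT).
case/orP => [/eqP -> | Hsep]; first exact: onpath_left.
case: (gpath_exists a b) => q Hq; rewrite (onpath_gpath _ Hq).
apply/negPn/negP => Hx; move/negP: Hsep; apply.
have [Hp /eqP Hl _] := and3P Hq.
have Hp' : path (restr e [set~ x]) a q.
  apply: restr_path Hp _; apply/allP => z Hz.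
  by rewrite !inE; apply: contraNneq Hx => <-.
by apply: (path_connect Hp'); rewrite -Hl mem_last.
Qed.

Lemma onpath_avoid_start x a y :
  onpath e x a y -> y != x -> connect (restr e [set~ x]) y a.
Proof.
case/onpathP => q /and3P[Hp /eqP Hl Hu] Hy Hyx.
case: q Hp Hl Hu Hy => [_ _ _|b q /andP[_ Hp] Hl /andP[Hx _]] Hy.
  by move: Hy; rewrite inE (negbTE Hyx).
move: Hy; rewrite inE (negbTE Hyx) /= => Hy.
have Hp' : path (restr e [set~ x]) b q.
  apply: restr_path Hp _; apply/allP => z Hz.
  by rewrite !inE; apply: contraNneq Hx => <-.
apply: (@connect_trans _ _ b).
  by rewrite connect_restr_sym; apply: (path_connect Hp').
by apply: (path_connect Hp'); rewrite -Hl /= mem_last.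
Qed.

Lemma onpath_between a b x y z :
  onpath e a b x -> onpath e x a y -> onpath e x b z -> onpath e y z x.
Proof.
move=> Hx Hy Hz; have [<-|yx] := eqVneq y x; first exact: onpath_left.
have [<-|zx] := eqVneq z x; first exact: onpath_right.
rewrite onpath_separates eq_sym (negbTE yx) /=; apply/negP => Hyz.
move: Hx; rewrite onpath_separates => /orP[/eqP Hxa|/negP []].
  by move: Hy; rewrite -Hxa => /onpath_same Hyx; rewrite Hyx eqxx in yx.
apply: (@connect_trans _ _ y).
  by rewrite connect_restr_sym; exact: onpath_avoid_start.
apply: (connect_trans Hyz); exact: onpath_avoid_start.
Qed.

Lemma onpath_hull (S : {set V}) a b x :
  a \in S -> b \in S -> onpath e a b x -> x \in hull e S.
Proof.
move=> aS bS Hx; rewrite inE; apply/existsP; exists a; rewrite aS.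
by apply/existsP; exists b; rewrite bS.
Qed.

Lemma hull_sub (S : {set V}) x : x \in S -> x \in hull e S.
Proof. by move=> xS; apply: (onpath_hull xS xS); exact: onpath_left. Qed.

(* The hull is convex: it contains every path between two of its vertices.
   If x were off all the paths P(a1,b1), P(a2,b2), P(a1,a2) then, removing x,
   y would still reach z through a1 and a2. *)
Lemma hull_convex (S : {set V}) x y z : y \in hull e S -> z \in hull e S ->
  onpath e y z x -> x \in hull e S.
Proof.
move=> Hy Hz Hx; move: Hy Hz; rewrite [y \in _]inE [z \in _]inE.
move=> /existsP[a1 /andP[a1S /existsP[b1 /andP[b1S H1]]]].
move=> /existsP[a2 /andP[a2S /existsP[b2 /andP[b2S H2]]]].
case E1: (onpath e a1 b1 x); first exact: onpath_hull E1.
case E2: (onpath e a2 b2 x); first exact: onpath_hull E2.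
case E3: (onpath e a1 a2 x); first exact: onpath_hull E3.
move: E1 E2 E3; rewrite !onpath_separates.
move=> /norP[_ /negbNE C1] /norP[_ /negbNE C2] /norP[_ /negbNE C3].
move: Hx; rewrite onpath_separates => /orP[/eqP Hxy|/negP []].
  by apply: (onpath_hull a1S b1S); rewrite Hxy.
apply: (@connect_trans _ _ a1).
  by rewrite connect_restr_sym; apply: connect_restr_onpath H1 C1.
by apply: (connect_trans C3); apply: connect_restr_onpath H2 C2.
Qed.

Lemma connected_convex (C : {set V}) a b y :
  connected_set C -> a \in C -> b \in C -> onpath e a b y -> y \in C.
Proof.
move=> HC aC bC Hy; have := connect_restr_onpath Hy (HC _ _ aC bC).
by have [<- //|Hne] := eqVneq a y; move/connect_restr_mem; apply.
Qed.

Lemma gpath_inner_neighbours a s b m : gpath e a s b -> m \in s -> m != b ->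
  exists x y, [/\ x \in a :: s, y \in a :: s, x != y, e m x & e m y].
Proof.
case/and3P => Hp /eqP Hl Hu Hm; case/splitPr: Hm Hp Hl Hu => p1 [|y p2].
  by rewrite last_cat /= => _ -> /[!eqxx].
rewrite cat_path => /andP[_ /= /and3P[Hxm Hmy _]] _ Hu _.
exists (last a p1), y; split => //; last by rewrite e_sym.
- by rewrite -cat_cons mem_cat mem_last.
- by rewrite -cat_cons mem_cat !inE eqxx !orbT.
have : uniq ((a :: p1) ++ m :: y :: p2) by [].
rewrite cat_uniq => /and3P[_ Hdisj _].
apply: contraNneq Hdisj => Hxy; apply/hasP; exists y; first by rewrite !inE eqxx orbT.
by rewrite -Hxy mem_last.
Qed.

Lemma steiner_no_branching (P : {set V}) m x y z :
  steiner_closed e P -> m \in hull e P :\: P ->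
  x \in hull e P -> y \in hull e P -> z \in hull e P ->
  e m x -> e m y -> e m z -> x != y -> y != z -> z != x -> False.
Proof.
move=> HsP Hm xH yH zH Hx Hy Hz nxy nyz nzx.
have : 2 < #|[set u in hull e P | e m u]|.
  by apply/card_gt2P; exists x, y, z; do !split => //; apply/setIdP.
by rewrite HsP.
Qed.

(* C is a connected component of G - P: connected, disjoint from P, and
   containing every neighbour outside P of each of its vertices. *)
Definition component_off (P C : {set V}) : Prop :=
  [/\ connected_set C, forall x, x \in C -> x \notin P
    & forall x y, x \in C -> e x y -> y \notin P -> y \in C].

Definition attachments (P C : {set V}) : {set V} :=
  [set u in P | [exists v in C, e u v]].

Lemma gpath_rcons a c b x :
  gpath e a c b -> e b x -> x \notin a :: c -> gpath e a (rcons c x) x.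
Proof.
case/and3P => Hp /eqP Hl Hu ebx Hx.
by rewrite /gpath rcons_path Hp Hl ebx last_rcons eqxx -rcons_cons rcons_uniq Hx Hu.
Qed.

Lemma attachment_gpath (P C : {set V}) u v w :
  connected_set C -> (forall x, x \in C -> x \notin P) ->
  u \in P -> v \in C -> e u v -> w \in C ->
  exists c, gpath e u c w /\ {subset c <= C}.
Proof.
move=> HC HCP uP vC euv wC.
have [q [Hp Hu Hl Hq]] := connect_restr_uniq_path (HC _ _ vC wC) vC.
have uq : u \notin v :: q by apply: contraL uP => /(allP Hq); apply: HCP.
exists (v :: q); split; last by move=> x Hx; apply: (allP Hq).
by rewrite /gpath cons_uniq uq Hu andbT /= euv Hp Hl eqxx.
Qed.

(* Key lemma: a connected set C outside a Steiner-closed set P is adjacent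
   to at most two vertices of P.  Given three, u1, u2, u3, the path s from u1
   through C to u2 lies in CH(P); the first vertex m on s of a path from u3
   through C to s lies in C, hence in CH(P) \ P, and has three neighbours in
   CH(P): its predecessor m' and its two neighbours on s. *)
Lemma attachments_le2 (P C : {set V}) :
  steiner_closed e P -> connected_set C -> (forall x, x \in C -> x \notin P) ->
  #|attachments P C| <= 2.
Proof.
move=> HsP HC HCP; rewrite leqNgt; apply/negP.
case/card_gt2P => [u1 [u2 [u3 [[]]]]].
rewrite !inE => /andP[u1P /existsP[v1 /andP[v1C e1]]].
move=> /andP[u2P /existsP[v2 /andP[v2C e2]]] /andP[u3P /existsP[v3 /andP[v3C e3]]].
case=> n12 n23 n31.
have PC u : u \in P -> u \notin C by move=> uP; apply: contraL uP; apply: HCP.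
have [c1 [Hg1 Hc1]] := attachment_gpath HC HCP u1P v1C e1 v2C.
pose s := rcons c1 u2.
have Hs : gpath e u1 s u2.
  apply: gpath_rcons Hg1 _ _; first by rewrite e_sym.
  by rewrite in_cons negb_or (eq_sym u2 u1) n12; apply: contra (PC _ u2P); apply: Hc1.
have sH z : z \in u1 :: s -> z \in hull e P.
  by move=> Hz; apply: (onpath_hull u1P u2P); rewrite (onpath_gpath _ Hs).
have v2s : v2 \in u1 :: s.
  case/and3P: Hg1 => _ /eqP <- _.
  by rewrite /s -rcons_cons mem_rcons in_cons mem_last orbT.
have u3s : u3 \notin u1 :: s.
  rewrite /s in_cons mem_rcons (in_cons u2) negb_or n31 negb_or (eq_sym u3 u2) n23.
  by apply: contra (PC _ u3P); apply: Hc1.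
have [c3 [Hg3 Hc3]] := attachment_gpath HC HCP u3P v3C e3 v2C.
have [Hp3 /eqP Hl3 _] := and3P Hg3.
have Hall3 : all [in [set x in u3 :: c3]] (u3 :: c3) by apply/allP => x; rewrite inE.
have Hout : u3 \notin [set x in u1 :: s] by rewrite inE.
have Hin : last u3 c3 \in [set x in u1 :: s] by rewrite inE Hl3.
have [m' [m [Hm'm]]] := path_exit Hp3 Hall3 Hout Hin.
rewrite in_setD in_setI !in_set => /andP[m'W m'c3] /andP[mc3 mW] _.
have mC : m \in C.
  move: mc3; rewrite in_cons => /orP[/eqP Hm|/Hc3 //].
  by move: mW; rewrite Hm (negbTE u3s).
have ms : m \in s.
  by move: mW; rewrite in_cons => /orP[/eqP Hm|//]; move: mC; rewrite Hm (negbTE (PC _ u1P)).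
have mu2 : m != u2 by apply: contraTneq mC => ->; apply: PC.
have [x [y [xs ys nxy Hmx Hmy]]] := gpath_inner_neighbours Hs ms mu2.
have m'H : m' \in hull e P.
  by apply: (hull_convex (hull_sub u3P) (sH v2 v2s)); rewrite (onpath_gpath _ Hg3).
apply: (steiner_no_branching HsP _ m'H (sH _ xs) (sH _ ys) _ Hmx Hmy _ nxy).
- by rewrite in_setD (sH _ mW) andbT; apply: HCP.
- by rewrite e_sym.
- by apply: contraNneq m'W => ->.
- by apply: contraNneq m'W => <-.
Qed.

Lemma components_props (A K : {set V}) : K \in components e A ->
  [/\ K \subset A, connected_set K
    & forall x y, x \in K -> e x y -> y \in A -> y \in K].
Proof.
case/imsetP => x0 x0A ->.
have Hreach y : connect (restr e A) x0 y ->
    connect (restr e [set y in A | connect (restr e A) x0 y]) x0 y.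
  case/connectP => p Hp ->; apply: (path_connect _ (mem_last _ _)).
  apply: restr_path (restr_path_base Hp) _; apply/allP => z Hz.
  rewrite inE (path_connect Hp Hz) andbT.
  by move: Hz; rewrite in_cons => /orP[/eqP -> //|/(restr_path_mem Hp)].
split.
- by apply/subsetP => y; rewrite inE => /andP[].
- move=> y z; rewrite !inE => /andP[_ Hy] /andP[_ Hz].
  apply: (@connect_trans _ _ x0); last exact: Hreach.
  by rewrite connect_restr_sym; apply: Hreach.
- move=> y z; rewrite !inE => /andP[yA Hy] eyz zA; rewrite zA /=.
  by apply: connect_trans Hy (connect1 _); rewrite /restr /= eyz yA zA.
Qed.

Lemma valid_st_inv S r ts : valid_st e S (Node r ts) ->
  [/\ r \in S, perm_eq [seq tset t | t <- ts] (enum (components e (S :\ r)))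
    & forall t, List.In t ts -> valid_st e (tset t) t].
Proof. by move=> H; inversion H; subst. Qed.

Lemma In_map_mem (T : Type) (U : eqType) (f : T -> U) x s :
  List.In x s -> f x \in map f s.
Proof. by elim: s => //= y s IH [->|/IH Hx]; rewrite in_cons ?eqxx ?Hx ?orbT. Qed.

Lemma valid_st_child S r ts t : valid_st e S (Node r ts) -> List.In t ts ->
  tset t \in components e (S :\ r).
Proof.
case/valid_st_inv => _ Hperm _ Hin; rewrite -mem_enum -(perm_mem Hperm).
exact: In_map_mem.
Qed.

Lemma tpath_sub (t : rtree V) (p : seq V) :
  tpath t p -> forall S, valid_st e S t -> {subset p <= S}.
Proof.
elim => [r ts | r ts t0 {}p Hin Ht IH] S Hv; have [rS _ Hch] := valid_st_inv Hv.
  by move=> x; rewrite inE => /eqP ->.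
move=> x; rewrite in_cons => /orP[/eqP -> //|Hx].
have [Hsub _ _] := components_props (valid_st_child Hv Hin).
by move: (IH _ (Hch _ Hin) _ Hx) => /(subsetP Hsub) /setD1P[].
Qed.

(* Along a root path p of a search tree on S, the nodes from p_i on (i > 0) lie
   in a connected set C avoiding p_0..p_(i-1) and closed under taking
   neighbours in S outside p_0..p_(i-1): the subtree rooted at p_i. *)
Lemma tpath_suffix_component (t : rtree V) (p : seq V) :
  tpath t p -> forall S i, valid_st e S t -> 0 < i < size p ->
  exists C : {set V}, [/\ {subset drop i p <= C}, C \subset S, connected_set C,
    {in C, forall x, x \notin take i p}
    & forall x y, x \in C -> e x y -> y \in S -> y \notin take i p -> y \in C].
Proof.
elim => [r ts | r ts t0 {}p Hin Ht IH] S i Hv /andP[i0 Hi].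
  by case: i i0 Hi => [|[|i]].
case: i i0 Hi => [|[|i]] // _ Hi.
- have [Hsub Hconn Hclos] := components_props (valid_st_child Hv Hin).
  have [_ _ Hch] := valid_st_inv Hv.
  exists (tset t0); split => //.
  + by rewrite /= drop0; apply: (tpath_sub Ht (Hch _ Hin)).
  + by apply: (subset_trans Hsub); apply: subsetDl.
  + by move=> x /(subsetP Hsub) /setD1P[xr _]; rewrite /= take0 inE.
  + move=> x y xt exy yS; rewrite /= take0 inE => yr.
    by apply: (Hclos x) => //; apply/setD1P.
- have [Hsub _ Hclos] := components_props (valid_st_child Hv Hin).
  have [_ _ Hch] := valid_st_inv Hv.
  have [C [HpC HCt HC HCp HCcl]] := IH _ i.+1 (Hch _ Hin) Hi.
  have HCS : C \subset S :\ r := subset_trans HCt Hsub.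
  exists C; split => //.
  + by apply: (subset_trans HCS); apply: subsetDl.
  + move=> x xC; rewrite /= in_cons negb_or HCp // andbT.
    by case/setD1P: (subsetP HCS _ xC).
  + move=> x y xC exy yS; rewrite /= in_cons negb_or => /andP[yr yp].
    apply: (HCcl x) => //; apply: (Hclos x) => //; first exact: (subsetP HCt).
    exact/setD1P.
Qed.

Lemma tpath_take (t : rtree V) (p : seq V) i :
  tpath t p -> 0 < i -> tpath t (take i p).
Proof.
move=> Ht; elim: Ht i => [r ts | r ts t' {}p Hin Ht IH] [|i] // _.
  exact: TP0.
case: i => [|i]; first by rewrite /= take0; apply: TP0.
by apply: TPS Hin (IH _ _).
Qed.

(* If every vertex of A is joined inside G[A] to a vertex of N, then G[A] has
   at most #|N| components, since each one is the component of a vertex of N. *)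
Lemma components_card_le (A N : {set V}) :
  (forall x, x \in A -> exists2 u, u \in N & connect (restr e A) x u) ->
  #|components e A| <= #|N|.
Proof.
move=> Hreach; pose comp u := [set y in A | connect (restr e A) u y].
apply: (leq_trans _ (leq_imset_card comp N)); apply: subset_leq_card.
apply/subsetP => K /imsetP[x xA ->]; have [u uN Hxu] := Hreach x xA.
apply/imsetP; exists u => //; apply/setP => y; rewrite !inE; congr andb.
apply/idP/idP; first by apply: connect_trans; rewrite connect_restr_sym.
exact: connect_trans.
Qed.

(* A vertex x of CH(S) outside CH(Q) sees some vertex w of S along a path
   avoiding CH(Q): otherwise, with x on P(a,b) for a, b in S, both P(x,a) and
   P(x,b) meet CH(Q), and x would lie between two vertices of CH(Q). *)
Lemma hull_escape (S Q : {set V}) x : x \in hull e S -> x \notin hull e Q ->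
  exists2 w, w \in S & forall y, onpath e x w y -> y \notin hull e Q.
Proof.
move=> xS xQ; move: (xS); rewrite inE.
case/existsP => a /andP[aS /existsP[b /andP[bS Hab]]].
have [Ha|] := boolP [forall y, onpath e x a y ==> (y \notin hull e Q)].
  by exists a => // y Hy; move/forallP: Ha => /(_ y); rewrite Hy.
have [Hb|] := boolP [forall y, onpath e x b y ==> (y \notin hull e Q)].
  by exists b => // y Hy; move/forallP: Hb => /(_ y); rewrite Hy.
rewrite !negb_forall => /existsP[z]; rewrite negb_imply negbK => /andP[Hz zQ].
move=> /existsP[y]; rewrite negb_imply negbK => /andP[Hy yQ].
by case/negP: xQ; apply: (hull_convex yQ zQ); apply: onpath_between Hab Hy Hz.
Qed.

(* Let C be a component of G - P containing a nonempty Q.  Every vertex x of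
   CH(P u Q) \ CH(Q) is joined inside this set to an attachment of C: first to
   a vertex w of P avoiding CH(Q), then along P(w,c), c in Q, up to the vertex
   just before entering C, which must lie in P. *)
Lemma reach_attachment (P Q C : {set V}) c x :
  component_off P C -> Q \subset C -> c \in Q ->
  x \in hull e (P :|: Q) :\: hull e Q ->
  exists2 u, u \in attachments P C
           & connect (restr e (hull e (P :|: Q) :\: hull e Q)) x u.
Proof.
move=> [HC HCP HCcl] HQC cQ /setDP[xH xnQ].
have HQC' : hull e Q \subset C.
  apply/subsetP => y; rewrite inE => /existsP[a /andP[aQ /existsP[b /andP[bQ Hy]]]].
  exact: (connected_convex HC (subsetP HQC _ aQ) (subsetP HQC _ bQ) Hy).
have [w wPQ Hw] := hull_escape xH xnQ.
have wP : w \in P.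
  case/setUP: wPQ => // wQ; move: (Hw w (onpath_right x w)).
  by rewrite hull_sub.
have cPQ : c \in P :|: Q by rewrite in_setU cQ orbT.
have Hxw : connect (restr e (hull e (P :|: Q) :\: hull e Q)) x w.
  apply: connect_restr_sub (connect_onpath x w); apply/subsetP => y; rewrite inE => Hy.
  by rewrite in_setD Hw // (hull_convex xH (hull_sub wPQ) Hy).
have [q Hq] := gpath_exists w c; have [Hp /eqP Hl _] := and3P Hq.
have Hall : all [in [set y | onpath e w c y]] (w :: q).
  by apply/allP => y Hy; rewrite inE (onpath_gpath _ Hq).
have wC : w \notin C by apply: contraL wP; apply: HCP.
have lC : last w q \in C by rewrite Hl (subsetP HQC).
have [u [v [euv /setDP[uX uC] /setIP[_ vC] Hwu]]] := path_exit Hp Hall wC lC.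
have uP : u \in P by apply: contraR uC; apply: HCcl vC _; rewrite e_sym.
exists u; first by rewrite inE uP; apply/existsP; exists v; rewrite vC.
apply: connect_trans Hxw (connect_restr_sub _ Hwu).
apply/subsetP => y /setDP[]; rewrite inE => Hy yC; rewrite in_setD.
rewrite (onpath_hull wPQ cPQ Hy) andbT.
by apply: contra yC; apply: (subsetP HQC').
Qed.

Lemma hull_diff_components_le2 (P Q C : {set V}) :
  steiner_closed e P -> component_off P C -> Q \subset C -> Q != set0 ->
  #|components e (hull e (P :|: Q) :\: hull e Q)| <= 2.
Proof.
move=> HsP HPC HQC /set0Pn[c cQ]; have [HC HCP _] := HPC.
apply: leq_trans (attachments_le2 HsP HC HCP).
apply: components_card_le => x Hx.
exact: reach_attachment HPC HQC cQ Hx.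
Qed.

End Tree.

Theorem mainTheorem5 (V : finType) (e : rel V) (T : rtree V) (Pi : seq V) (i : nat) :
  is_tree e ->
  search_tree e T ->
  steiner_closed_tree e T ->
  tpath T Pi ->
  0 < i < size Pi ->
  #|components e (hull e [set x in Pi] :\: hull e [set x in drop i Pi])| <= 2.
Proof.
move=> Htree HT Hsc HPi Hi; have /andP[i0 iPi] := Hi.
have [C [HdC _ HC HCp HCcl]] := tpath_suffix_component Htree HPi HT Hi.
have -> : [set x in Pi] = [set x in take i Pi] :|: [set x in drop i Pi].
  by apply/setP => x; rewrite !inE -mem_cat cat_take_drop.
apply: (hull_diff_components_le2 Htree (Hsc _ (tpath_take HPi i0)) (C := C)).
- split; first exact: HC.
  + by move=> x xC; rewrite inE; apply: HCp.
  + by move=> x y xC exy; rewrite inE; apply: (HCcl x y xC exy (in_setT y)).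
- by apply/subsetP => x; rewrite inE => /HdC.
- have : 0 < size (drop i Pi) by rewrite size_drop subn_gt0 iPi.
  by case: (drop i Pi) => [|c s] // _; apply/set0Pn; exists c; rewrite inE mem_head.
Qed.
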